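(* Let $u\in\mathbb{R}$, $q=Q_v(u)$, $r=\mathcal{S}(U(u))$, $e=u-\sup\{T_n^0:T_n^0\le u\}$, $z^+=(q,r,e)$ and $z^-=(0,0,e)$. Then for all $t\ge u$, \[ Q_u(t-u;z^-)\le Q_u(t-u;z^+)\le Q_v(t).\]
   Context: Let $c\ge1$. Let $G,F$ be CDFs of strictly positive random variables $A$ (interarrival) and $V$ (service), $\lambda=1/E[A]$, $\mu=1/E[V]$, $\lambda<c\mu$. Let $\mathcal{T}^0=\{T_n^0:n\in\mathbb{Z}\setminus\{0\}\}$ be a time-stationary renewal point process with inter-renewal CDF $G$, indexed $\dots<T_{-1}^0<0<T_1^0<\dots$. Let $\mathcal{T}^i=\{T_n^i\}$, $i=1,\dots,c$, be i.i.d. time-stationary renewal processes with inter-renewal CDF $F$, independent of $\mathcal{T}^0$; $V_k^i=T_k^{i,+}-T_k^i$ where $T_k^{i,+}$ is the next point after $T_k^i$. $U^i(t)=\inf\{T_n^i:T_n^i>t\}-t$, $U(t)=(U^1(t),\dots,U^c(t))$; $\mathcal{S}$ sorts ascending. Vacation system: customers arrive at the points of $\mathcal{T}^0$ and wait in a FCFS queue; at each point $T_k^i$, if the queue is nonempty just before, the head customer leaves the queue and is served by server $i$ for time $V_k^i$, otherwise server $i$ takes a vacation of length $V_k^i$. Its stationary number waiting in queue is $Q_v(t)=\sup_{s\le t}\big(|(s,t]\cap\mathcal{T}^0|-\sum_{i=1}^c|(s,t]\cap\mathcal{T}^i|\big)$. The customer arriving at $T_n^0$ leaves this queue at some point $T_k^{i(n)}$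 and is assigned service time $V_n:=V_k^{i(n)}$. For $u\in\mathbb{R}$ and $z=(q,r,e)$ ($q\in\mathbb{Z}_{\ge0}$, $r\in\mathbb{R}_{\ge0}^c$ ascending, $e\ge0$), $Q_u(t;z)$, $t\ge0$, is the number of customers waiting in queue at time $u+t$ in a FCFS $c$-server queue which at time $u$ has $q$ customers waiting, sorted remaining service times $r$ at the servers and time $e$ since the last arrival, and which is fed by the customers arriving at $T_n^0\in(u,u+t]$ with service times $V_n$. *)

From mathcomp Require Import all_boot all_order all_algebra.
From mathcomp Require Import boolp classical_sets reals.
Set Implicit Arguments. Unset Strict Implicit. Unset Printing Implicit Defensive.
Import Order.TTheory GRing.Theory Num.Theory.
Local Open Scope ring_scope.
Local Open Scope classical_set_scope.

Section QueueDefs.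
Variable R : realType.

(* A (sample path of a) simple point process on R, listed increasingly by
   integer indices: strictly increasing and unbounded in both directions
   (hence locally finite). *)
Definition point_process (T : int -> R) : Prop :=
  (forall n m : int, n < m -> T n < T m) /\
  (forall x : R, exists n, x < T n) /\
  (forall x : R, exists n, T n < x).

Definition last_idx (T : int -> R) (t : R) : int :=
  xget 0 [set n : int | T n <= t < T (n + 1)].

(* |(s,t] ∩ T| for s <= t. *)
Definition cnt (T : int -> R) (s t : R) : int := last_idx T t - last_idx T s.

Definition resid (T : int -> R) (t : R) : R := T (last_idx T t + 1) - t.

Variable c : nat.
Variables (T0 : int -> R) (T : 'I_c -> int -> R).

Definition netput (s t : R) : int := cnt T0 s t - \sum_(i < c) cnt (T i) s t.

(* k is the supremum (attained, as a maximum) of netput (s,t] over s <= t *)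
Definition is_Qv (t : R) (k : int) : Prop :=
  (exists s, s <= t /\ k = netput s t) /\ (forall s, s <= t -> netput s t <= k).

Definition Qv (t : R) : int := xget 0 [set k | is_Qv t k].

(* The customer arriving at T0 n leaves the vacation queue at time tau:
   the first time after its arrival at which the queue content is no larger
   than the number of later arrivals (FCFS). *)
Definition leaves_at (n : int) (tau : R) : Prop :=
  T0 n < tau /\ Qv tau <= cnt T0 (T0 n) tau /\
  (forall tau', T0 n < tau' < tau -> cnt T0 (T0 n) tau' < Qv tau').

Definition Vserv (n : int) : R :=
  xget 0 [set v | exists (i : 'I_c) (k : int),
                    leaves_at n (T i k) /\ v = T i (k + 1) - T i k].

(* FCFS c-server queue, Kiefer-Wolfowitz style: F = absolute times at which
   the servers become free; customers (a, v) (arrival time, service time)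
   in FCFS order; returns the times at which customers enter service. *)
Fixpoint fcfs_starts (F : seq R) (cs : seq (R * R)) : seq R :=
  match cs with
  | [::] => [::]
  | (a, v) :: cs' =>
      let F1 := sort <=%R F in
      let s := Num.max a (head 0 F1) in
      s :: fcfs_starts (s + v :: behead F1) cs'
  end.

(* Q_u(t; z), z = (q, r, e): number of customers waiting in queue at time u+t
   in the FCFS c-server queue which at time u has q customers waiting (the
   q most recent arrivals up to time u, carrying their service times V_n),
   remaining service times r at the servers (server free at u + r_i) and
   time e since the last arrival, fed by the customers arriving at
   T0 n in (u, u+t] with service times V_n. *)
Definition Qstd (u : R) (q : nat) (r : seq R) (e : R) (t : R) : nat :=
  let nu := last_idx T0 u in
  let init := [seq (u, Vserv (nu - q%:Z + 1 + k%:Z)) | k <- iota 0 q] in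
  let arr := [seq (T0 (nu + 1 + k%:Z), Vserv (nu + 1 + k%:Z))
             | k <- iota 0 `|last_idx T0 (u + t) - nu|%N] in
  let starts := fcfs_starts [seq u + x | x <- r] (init ++ arr) in
  count (fun s => u + t < s) starts.

End QueueDefs.

(* Both bounds rest on one comparison principle for the FCFS recursion: if the
   customers can be started at times s_0 <= s_1 <= ... by some assignment to
   servers (each customer no earlier than its arrival, on a server free by
   then, which is busy during the service time), then the FCFS start times are
   no later than the s_j.  From idle servers at time u, with all arrivals after
   u, the FCFS run from any other state is such an assignment: this gives the
   first inequality.  For the second, the vacation system provides the
   assignment.  With D t = A t - Q_v(t), where A t is the index of the last
   arrival by t, customer n leaves the vacation queue at the first service
   point after u at which D reaches n, and its service time is the next gap of
   that server's renewal process.  Hence in the queue started from z^+ all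
   customers of index at most D t have started by time t, and at most
   A t - D t = Q_v(t) are still waiting. *)

From mathcomp Require Import all_boot all_order all_algebra.
From mathcomp Require Import boolp classical_sets reals.
From mathcomp Require Import zify ring.
Import Order.TTheory GRing.Theory Num.Theory.
Local Open Scope ring_scope.
Set Implicit Arguments. Unset Strict Implicit. Unset Printing Implicit Defensive.

Section FCFS.
Variable R : realType.
Implicit Types (F G : seq R) (cs : seq (R * R)) (a v s x y : R).

Definition nfree y F : nat := count (fun f => f <= y) F.

Lemma sort_eq_nil F : (sort <=%R F == [::]) = (F == [::]).
Proof. by rewrite -!size_eq0 size_sort. Qed.

Lemma head_sort_le F x : x \in F -> head 0 (sort <=%R F) <= x.
Proof.
rewrite -(mem_sort <=%R); have := sort_le_sorted F.
case: (sort <=%R F) => [//|h l] /= /le_path_min /allP Hl.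
by rewrite inE => /predU1P [-> //| /Hl].
Qed.

Lemma head_sort_mem F : F != [::] -> head 0 (sort <=%R F) \in F.
Proof.
rewrite -sort_eq_nil -(mem_sort <=%R F).
by case: (sort <=%R F) => [//|h l] _; rewrite mem_head.
Qed.

Lemma head_sort_le_behead F x : x \in behead (sort <=%R F) -> head 0 (sort <=%R F) <= x.
Proof.
have := sort_le_sorted F.
by case: (sort <=%R F) => [//|h l] /= /le_path_min /allP Hl /Hl.
Qed.

Lemma nfree_behead_sort y F : F != [::] ->
  nfree y (behead (sort <=%R F)) = (nfree y F - (head 0 (sort <=%R F) <= y)%R)%N.
Proof.
rewrite /nfree -(count_sort <=%R _ F) -sort_eq_nil.
by case: (sort <=%R F) => [//|h l] _ /=; case: (h <= y) => /=; lia.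
Qed.

Lemma nfree_pos y F : has (fun f => f <= y) F -> (0 < nfree y F)%N.
Proof. by rewrite /nfree has_count. Qed.

Fixpoint fcfs_state F cs : seq R :=
  if cs is (a, v) :: cs' then
    let F1 := sort <=%R F in
    fcfs_state (Num.max a (head 0 F1) + v :: behead F1) cs'
  else F.

Lemma size_fcfs_starts F cs : size (fcfs_starts F cs) = size cs.
Proof. by elim: cs F => [|[a v] cs IH] F //=; rewrite IH. Qed.

Lemma size_fcfs_state F cs : F != [::] -> size (fcfs_state F cs) = size F.
Proof.
elim: cs F => [|[a v] cs IH] F F0 //=; rewrite IH //=.
by move: F0; rewrite -sort_eq_nil -(size_sort <=%R F); case: (sort <=%R F).
Qed.

Lemma fcfs_state_eq_nil F cs : F != [::] -> fcfs_state F cs != [::].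
Proof. by move=> F0; rewrite -size_eq0 size_fcfs_state // size_eq0. Qed.

Lemma fcfs_starts_cat F cs1 cs2 :
  fcfs_starts F (cs1 ++ cs2) = fcfs_starts F cs1 ++ fcfs_starts (fcfs_state F cs1) cs2.
Proof. by elim: cs1 F => [|[a v] cs1 IH] F //=; rewrite IH. Qed.

Lemma nth_fcfs_starts F cs j : (j < size cs)%N ->
  nth 0 (fcfs_starts F cs) j =
  Num.max (nth (0, 0) cs j).1 (head 0 (sort <=%R (fcfs_state F (take j cs)))).
Proof. by elim: cs F j => [|[a v] cs IH] F [|j] //= /IH. Qed.

Lemma fcfs_state_takeS F cs j : (j < size cs)%N ->
  fcfs_state F (take j.+1 cs) =
  nth 0 (fcfs_starts F cs) j + (nth (0, 0) cs j).2
    :: behead (sort <=%R (fcfs_state F (take j cs))).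
Proof. by elim: cs F j => [|[a v] cs IH] F [|j] //= hj; rewrite ?take0 ?IH. Qed.

Lemma fcfs_starts_sorted F cs : F != [::] ->
  sorted <=%R (unzip1 cs) -> all (fun cv => 0 <= cv.2) cs ->
  sorted <=%R (fcfs_starts F cs).
Proof.
elim: cs F => [|[a v] cs IH] F F0 //= a_sorted /andP[v_ge0 cs_ge0].
set h := head 0 (sort <=%R F); set F' := Num.max a h + v :: behead (sort <=%R F).
have F'0 : F' != [::] by [].
have := IH F' F'0 (path_sorted a_sorted) cs_ge0.
case: cs a_sorted {IH cs_ge0} => [//|[a' v'] cs] /= /andP[aa' _] ->; rewrite andbT.
have hh : h <= head 0 (sort <=%R F').
  have := head_sort_mem F'0; rewrite inE => /predU1P [-> | /head_sort_le_behead //].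
  by rewrite -[leLHS]addr0 lerD // le_max lexx orbT.
by rewrite ge_max !le_max aa' hh orbT.
Qed.

(* (a, v) can be started at time s on a server of G free by then, and G' is G
   with that server becoming free at s + v; G' is only described through the
   counts nfree y for y >= s. *)
Definition schedule_step G G' a v s : Prop :=
  [/\ a <= s, has (fun g => g <= s) G &
      forall y, s <= y -> (nfree y G' + 1 <= nfree y G + (s + v <= y)%R)%N].

Lemma fcfs_start_le F G G' sg a v s :
  (forall y, sg <= y -> (nfree y G <= nfree y F)%N) -> sg <= s ->
  schedule_step G G' a v s ->
  let s' := Num.max a (head 0 (sort <=%R F)) in
  s' <= s /\
  forall y, s <= y -> (nfree y G' <= nfree y ((s' + v)%R :: behead (sort <=%R F)))%N.
Proof.
move=> GF sg_s [a_s G_s G'G] s'.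
have F_s : has (fun f => f <= s) F.
  by rewrite has_count (leq_trans _ (GF _ sg_s)) // -has_count.
have F0 : F != [::] by case: F F_s {GF s'}.
have h_s : head 0 (sort <=%R F) <= s.
  by have [f fF f_s] := hasP F_s; exact: le_trans (head_sort_le fF) f_s.
have s'_s : s' <= s by rewrite ge_max a_s h_s.
split=> // y s_y.
rewrite [nfree y (_ :: _)]/nfree /= -/(nfree y _) nfree_behead_sort // (le_trans h_s s_y).
have := G'G y s_y; have := GF y (le_trans sg_s s_y).
have : (s + v <= y) -> (s' + v <= y) by apply: le_trans; rewrite lerD2r.
by case: (s + v <= y); case: (s' + v <= y) => //=; lia.
Qed.

Lemma fcfs_starts_le_schedule cs F sg (s : nat -> R) (Gs : nat -> seq R) :
  (forall y, sg <= y -> (nfree y (Gs 0%N) <= nfree y F)%N) -> sg <= s 0%N ->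
  (forall j, (j.+1 < size cs)%N -> s j <= s j.+1) ->
  (forall j, (j < size cs)%N ->
     schedule_step (Gs j) (Gs j.+1) (nth (0, 0) cs j).1 (nth (0, 0) cs j).2 (s j)) ->
  forall j, (j < size cs)%N -> nth 0 (fcfs_starts F cs) j <= s j.
Proof.
elim: cs F sg s Gs => [//|[a v] cs IH] F sg s Gs GF sg_s s_mono steps.
have [s'_s GF'] := fcfs_start_le GF sg_s (steps 0%N isT).
case=> [//|j] /= j_lt.
apply: (IH _ (s 0%N) (fun k => s k.+1) (fun k => Gs k.+1)) => // [|k k_lt|k k_lt].
- by apply: (s_mono 0%N) => /=; lia.
- exact: (s_mono k.+1).
- exact: (steps k.+1).
Qed.

Lemma fcfs_schedule_step F cs j : F != [::] -> (j < size cs)%N ->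
  schedule_step (fcfs_state F (take j cs)) (fcfs_state F (take j.+1 cs))
    (nth (0, 0) cs j).1 (nth (0, 0) cs j).2 (nth 0 (fcfs_starts F cs) j).
Proof.
move=> F0 j_lt; set G := fcfs_state F (take j cs).
have G0 : G != [::] by exact: fcfs_state_eq_nil.
have h_s : head 0 (sort <=%R G) <= nth 0 (fcfs_starts F cs) j.
  by rewrite nth_fcfs_starts // le_max lexx orbT.
have G_s y : nth 0 (fcfs_starts F cs) j <= y -> has (fun g => g <= y) G.
  move=> s_y; apply/hasP; exists (head 0 (sort <=%R G)); first exact: head_sort_mem.
  exact: le_trans h_s s_y.
split.
- by rewrite nth_fcfs_starts // le_max lexx.
- exact: G_s.
- move=> y s_y; rewrite fcfs_state_takeS // -/G [nfree y (_ :: _)]/nfree /= -/(nfree y _).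
  rewrite nfree_behead_sort // (le_trans h_s s_y).
  by have := nfree_pos (G_s y s_y); case: (_ + _ <= y) => /=; lia.
Qed.

Lemma fcfs_starts_idle_le u F cs : F != [::] ->
  sorted <=%R (unzip1 cs) -> all (fun cv => u <= cv.1) cs -> all (fun cv => 0 <= cv.2) cs ->
  forall j, (j < size cs)%N ->
  nth 0 (fcfs_starts (nseq (size F) u) cs) j <= nth 0 (fcfs_starts F cs) j.
Proof.
move=> F0 a_sorted a_ge v_ge0 j j_lt.
have s_sorted := fcfs_starts_sorted F0 a_sorted v_ge0.
have cs0 : (0 < size cs)%N by apply: leq_ltn_trans j_lt.
apply: (fcfs_starts_le_schedule (sg := u) (Gs := fun k => fcfs_state F (take k cs))) => //.
- move=> y u_y; rewrite take0 /nfree count_nseq u_y mul1n; exact: count_size.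
- rewrite nth_fcfs_starts // le_max (all_nthP (0, 0) a_ge 0%N cs0) //.
- move=> k k_lt; apply: (sorted_leq_nth le_trans lexx) => //;
    rewrite inE size_fcfs_starts //; exact: ltnW.
- by move=> k k_lt; exact: fcfs_schedule_step.
Qed.

Lemma count_gt_le_nth (l1 l2 : seq R) (t : R) : size l1 = size l2 ->
  (forall j, (j < size l1)%N -> nth 0 l1 j <= nth 0 l2 j) ->
  (count (fun x => t < x)%R l1 <= count (fun x => t < x)%R l2)%N.
Proof.
elim: l1 l2 => [|x l1 IH] [|y l2] //= [size_eq] le12.
apply: leq_add; last by apply: IH => // j; apply: (le12 j.+1).
have /= xy := le12 0%N isT.
by have [tx|] := ltP t x; rewrite //= (lt_le_trans tx xy).
Qed.

End FCFS.

Lemma count_le_size_drop (T : Type) (x0 : T) (p : pred T) (l : seq T) J :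
  (forall j, (j < J)%N -> ~~ p (nth x0 l j)) -> (count p l <= size l - J)%N.
Proof.
move=> pF; rewrite -[in count _ l](cat_take_drop J l) count_cat -size_drop.
have -> : count p (take J l) = 0%N.
  apply/eqP; rewrite -leqn0 leqNgt -has_count; apply/(has_nthP x0) => -[j].
  rewrite size_take_min ltn_min => /andP[jJ jl]; rewrite nth_take //; exact/negP/pF.
exact: count_size.
Qed.

Section PointProcess.
Variables (R : realType) (T : int -> R).
Hypothesis hT : point_process T.

Lemma pp_ltE n m : (T n < T m) = (n < m).
Proof.
case: hT => T_mono _; apply/idP/idP; last exact: T_mono.
by apply: contraLR; rewrite -!leNgt le_eqVlt => /predU1P [-> //| /T_mono/ltW].
Qed.

Lemma pp_leE n m : (T n <= T m) = (n <= m).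
Proof. by rewrite !leNgt pp_ltE. Qed.

Lemma pp_inj : injective T.
Proof. by move=> n m e; apply/eqP; rewrite eq_le -!pp_leE e lexx. Qed.

Lemma last_idx_spec t : T (last_idx T t) <= t < T (last_idx T t + 1).
Proof.
suff : exists n, T n <= t < T (n + 1) by exact: xgetPex.
case: hT => _ [/(_ t) [m tm] /(_ t) [n0 n0t]].
have below (k : nat) : T (n0 + k%:Z) <= t -> (k <= `|m - n0|)%N.
  by move=> /le_lt_trans/(_ tm); rewrite pp_ltE; lia.
have n00 : T (n0 + 0%:Z) <= t by rewrite addr0 ltW.
have [k n0k k_max] := ex_maxnP (ex_intro _ 0%N n00) below.
exists (n0 + k%:Z); rewrite n0k /= ltNge; apply/negP => tk.
have : T (n0 + k.+1%:Z) <= t by rewrite (_ : n0 + _ = n0 + k%:Z + 1) //; lia.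
by move/k_max; rewrite ltnn.
Qed.

Lemma le_last_idx n t : (T n <= t) = (n <= last_idx T t).
Proof.
have /andP[lo hi] := last_idx_spec t.
apply/idP/idP => [Tn_t|n_le]; first by rewrite -ltzD1 -pp_ltE (le_lt_trans Tn_t hi).
by apply: le_trans lo; rewrite pp_leE.
Qed.

Lemma lt_last_idx n t : (t < T n) = (last_idx T t < n).
Proof. by rewrite ltNge le_last_idx -ltNge. Qed.

Lemma last_idx_eq n t : T n <= t < T (n + 1) -> last_idx T t = n.
Proof.
case/andP=> lo hi; apply/eqP; rewrite eq_le -le_last_idx lo andbT -ltzD1 -lt_last_idx.
exact: hi.
Qed.

Lemma last_idx_point n : last_idx T (T n) = n.
Proof. by apply: last_idx_eq; rewrite lexx pp_ltE ltzD1 lexx. Qed.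

Lemma last_idx_mono : {homo last_idx T : s t / s <= t}.
Proof.
by move=> s t st; rewrite -le_last_idx (le_trans _ st) //; case/andP: (last_idx_spec s).
Qed.

End PointProcess.

Section Vacation.
Variables (R : realType) (c : nat) (T0 : int -> R) (T : 'I_c -> int -> R).
Hypothesis hc : (0 < c)%N.
Hypothesis hT0 : point_process T0.
Hypothesis hT : forall i, point_process (T i).
Hypothesis hdis0 : forall (i : 'I_c) (n m : int), T i n <> T0 m.
Hypothesis hdis : forall (i j : 'I_c) (n m : int), i != j -> T i n <> T j m.
Hypothesis hstab : forall t : R, exists k : int, is_Qv T0 T t k.

Let A t := last_idx T0 t.
Let S t := \sum_(i < c) last_idx (T i) t.
Let X t := A t - S t.
Let Q t := Qv T0 T t.
(* [D t] is the index of the last customer to have left the vacation queue by time [t]. *)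
Let D t := A t - Q t.

Lemma netputE s t : netput T0 T s t = X t - X s.
Proof. by rewrite /netput /cnt /X /S /A sumrB; ring. Qed.

Lemma QvP t : is_Qv T0 T t (Q t).
Proof. exact: xgetPex (hstab t). Qed.

Lemma Q_ge s t : s <= t -> X t - X s <= Q t.
Proof. by move=> st; case: (QvP t) => _ /(_ s st); rewrite netputE. Qed.

Lemma Q_attained t : exists2 s, s <= t & Q t = X t - X s.
Proof. by case: (QvP t) => [[s [st ->]] _]; exists s; rewrite // netputE. Qed.

Lemma Q_ge0 t : 0 <= Q t.
Proof. by have := Q_ge (lexx t); rewrite subrr. Qed.

Lemma S_mono : {homo S : s t / s <= t}.
Proof. by move=> s t st; apply: ler_sum => i _; apply: last_idx_mono. Qed.

Lemma D_mono : {homo D : s t / s <= t}.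
Proof.
move=> s t st; have [w wt Qt] := Q_attained t.
have := S_mono st; have := Q_ge0 s; rewrite /D Qt /X.
case: (leP w s) => [ws | /ltW sw]; first by have := Q_ge ws; rewrite /X; lia.
by have := S_mono wt; have := last_idx_mono hT0 sw; rewrite -/(A s) -/(A w); lia.
Qed.

Lemma D_le_S s t : s <= t -> D t <= D s + (S t - S s).
Proof.
move=> st; have [w ws Qs] := Q_attained s.
by have := Q_ge (le_trans ws st); rewrite /D Qs /X; lia.
Qed.

Let next_point i x := T i (last_idx (T i) x + 1).
Let next_server x : 'I_c := [arg min_(i < Ordinal hc) next_point i x]%O.
Let next_service x := next_point (next_server x) x.

Lemma next_point_gt i x : x < next_point i x.
Proof. by case/andP: (last_idx_spec (hT i) x). Qed.

Lemma next_point_mono i : {homo next_point i : x y / x <= y}.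
Proof. by move=> x y xy; rewrite /next_point (pp_leE (hT i)) lerD2r last_idx_mono. Qed.

Lemma next_service_le i x : next_service x <= next_point i x.
Proof. by rewrite /next_service /next_server; case: arg_minP => // j _; apply. Qed.

Lemma next_service_gt x : x < next_service x.
Proof. exact: next_point_gt. Qed.

Lemma last_idx_before_next_service i x y : x <= y -> y < next_service x ->
  last_idx (T i) y = last_idx (T i) x.
Proof.
move=> xy y_lt; apply: last_idx_eq => //.
rewrite (lt_le_trans y_lt (next_service_le i x)) andbT (le_trans _ xy) //.
by case/andP: (last_idx_spec (hT i) x).
Qed.

Lemma last_idx_next_service x :
  last_idx (T (next_server x)) (next_service x) = last_idx (T (next_server x)) x + 1.
Proof. exact: last_idx_point. Qed.

Lemma last_idx_next_service_other i x : i != next_server x ->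
  last_idx (T i) (next_service x) = last_idx (T i) x.
Proof.
move=> i_ns; apply: last_idx_eq => //.
rewrite lt_neqAle next_service_le andbT (le_trans _ (ltW (next_service_gt x))); last first.
  by case/andP: (last_idx_spec (hT i) x).
by apply/eqP => /esym; exact: hdis.
Qed.

Lemma S_next_service x : S (next_service x) = S x + 1.
Proof.
rewrite /S (bigD1 (next_server x)) //= [in RHS](bigD1 (next_server x)) //=.
rewrite last_idx_next_service (eq_bigr (fun i => last_idx (T i) x)); first by rewrite addrAC.
by move=> i; apply: last_idx_next_service_other.
Qed.

Lemma S_before_next_service x y : x <= y -> y < next_service x -> S y = S x.
Proof. by move=> xy y_lt; apply: eq_bigr => i _; apply: last_idx_before_next_service. Qed.

Lemma D_before_next_service x y : x <= y -> y < next_service x -> D y = D x.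
Proof.
move=> xy y_lt; apply/eqP; rewrite eq_le (D_mono xy) andbT.
by have := D_le_S xy; rewrite (S_before_next_service xy y_lt) subrr addr0.
Qed.

Lemma D_next_service x : D (next_service x) <= D x + 1.
Proof. by have := D_le_S (ltW (next_service_gt x)); rewrite S_next_service; lia. Qed.

Lemma Vserv_ge0 n : 0 <= Vserv T0 T n.
Proof.
rewrite /Vserv; case: xgetP => // v _ [i [k [_ ->]]].
by rewrite subr_ge0 (pp_leE (hT i)); lia.
Qed.

Lemma leaves_at_uniq n t1 t2 : leaves_at T0 T n t1 -> leaves_at T0 T n t2 -> t1 = t2.
Proof.
move=> [n_t1 [left1 before1]] [n_t2 [left2 before2]]; case: (ltgtP t1 t2) => // t12.
  by have := before2 t1; rewrite n_t1 t12 => /(_ isT); rewrite ltNge left1.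
by have := before1 t2; rewrite n_t2 t12 => /(_ isT); rewrite ltNge left2.
Qed.

(* Just before an arrival, after the previous arrival and the last service point,
   the netput up to the arrival is 1, so the customer cannot leave on arrival. *)
Lemma D_arrival n : D (T0 n) < n.
Proof.
pose prev i := T i (last_idx (T i) (T0 n)).
have prev_lt i : prev i < T0 n.
  rewrite lt_neqAle; case/andP: (last_idx_spec (hT i) (T0 n)) => -> _.
  by rewrite andbT; apply/eqP; exact: hdis0.
pose i1 := [arg max_(i > Ordinal hc) prev i]%O.
have prev_le i : prev i <= prev i1 by rewrite /i1; case: arg_maxP => // j _; apply.
pose s := Num.max (T0 (n - 1)) (prev i1).
have s_lt : s < T0 n by rewrite gt_max prev_lt andbT (pp_ltE hT0); lia.
have A_s : A s = n - 1 by apply: last_idx_eq; rewrite // le_max lexx subrK s_lt.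
have last_s i : last_idx (T i) s = last_idx (T i) (T0 n).
  apply: last_idx_eq => //; rewrite (le_trans (prev_le i)) ?le_max ?lexx ?orbT //=.
  exact: lt_trans s_lt (next_point_gt i (T0 n)).
have : X (T0 n) - X s = 1.
  by rewrite /X /S (eq_bigr _ (fun i _ => last_s i)) A_s /A last_idx_point //; ring.
by have := Q_ge (ltW s_lt); rewrite /D /A last_idx_point //; lia.
Qed.

Let next_points x := [seq next_point i x | i <- enum 'I_c].

Lemma nfree_next_points y x :
  nfree y (next_points x) = (\sum_(i < c) (next_point i x <= y)%R)%N.
Proof.
rewrite /nfree count_map -sum1_count big_enum_cond /= big_mkcond /=.
by apply: eq_bigr => i _; case: (_ <= y).
Qed.

Lemma nfree_next_points_step xp x y : xp <= x -> next_service x <= y ->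
  (nfree y (next_points (next_service x)) + 1 <=
   nfree y (next_points xp) + (next_point (next_server x) (next_service x) <= y)%R)%N.
Proof.
move=> xp_x ns_y; set i := next_server x.
rewrite !nfree_next_points (bigD1 i) //= [K in (_ <= K + _)%N](bigD1 i) //=.
have -> : (next_point i xp <= y) = true by apply: le_trans (next_point_mono i xp_x) ns_y.
have others : (\sum_(j < c | j != i) (next_point j (next_service x) <= y)%R
               <= \sum_(j < c | j != i) (next_point j xp <= y)%R)%N.
  apply: leq_sum => j _; case: (boolP (next_point j (next_service x) <= y)) => //= jy.
  by rewrite (le_trans _ jy) // next_point_mono // (le_trans xp_x) // ltW // next_service_gt.
case: (next_point i (next_service x) <= y) => /=; first by rewrite leq_add2r leq_add2l.
by rewrite add0n addn0 addnC leq_add2l.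
Qed.

Variable u : R.
Let epoch j := iter j next_service u.

Lemma epoch_leE j k : (epoch j <= epoch k) = (j <= k)%N.
Proof. exact: (le_mono (homo_ltn lt_trans (fun j => next_service_gt (epoch j)))). Qed.

Lemma epoch_ge j : u <= epoch j.
Proof. by rewrite -[leLHS]/(epoch 0) epoch_leE. Qed.

Lemma S_epoch j : S (epoch j) = S u + j%:Z.
Proof.
elim: j => [|j IH]; first by rewrite addr0.
by rewrite /= S_next_service -/(epoch j) IH; lia.
Qed.

Lemma epoch_locate y : u <= y -> exists j, epoch j <= y < epoch j.+1.
Proof.
move=> uy; have bounded j : epoch j <= y -> (j <= `|S y - S u|)%N.
  by move/S_mono; rewrite S_epoch; lia.
have [j yj j_max] := ex_maxnP (ex_intro (fun j => epoch j <= y) 0%N uy) bounded.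
by exists j; rewrite yj ltNge; apply/negP => /j_max; rewrite ltnn.
Qed.

Let waiting (q : nat) := [seq (u, Vserv T0 T (A u - q%:Z + 1 + k%:Z)) | k <- iota 0 q].
Let arrivals K := [seq (T0 (A u + 1 + k%:Z), Vserv T0 T (A u + 1 + k%:Z)) | k <- iota 0 K].

Lemma QstdE q r e t : Qstd T0 T u q r e (t - u) =
  count (fun s => t < s)
    (fcfs_starts [seq u + x | x <- r] (waiting q ++ arrivals `|A t - A u|)).
Proof. by rewrite /Qstd subrKC. Qed.

Lemma Qstd_idle_le q r e t : size r = c ->
  (Qstd T0 T u 0 (nseq c 0%R) e (t - u) <= Qstd T0 T u q r e (t - u))%N.
Proof.
move=> size_r; rewrite !QstdE map_nseq addr0 (_ : waiting 0 = [::]) // cat0s.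
rewrite fcfs_starts_cat count_cat.
apply: leq_trans (leq_addl _ _).
set F := fcfs_state _ _.
have r0 : [seq u + x | x <- r] != [::] by rewrite -size_eq0 size_map size_r -lt0n.
have F0 : F != [::] by exact: fcfs_state_eq_nil.
have size_F : size F = c by rewrite size_fcfs_state ?size_map.
rewrite -{1}size_F; apply: count_gt_le_nth; first by rewrite !size_fcfs_starts.
rewrite size_fcfs_starts; apply: fcfs_starts_idle_le => //.
- rewrite /unzip1 -map_comp; apply: homo_sorted (iota_sorted 0 _) => j k jk /=.
  by rewrite (pp_leE hT0) lerD2l lez_nat.
- apply/allP => _ /mapP[k _ ->] /=; apply: ltW.
  by rewrite lt_last_idx // /A; lia.
- by apply/allP => _ /mapP[k _ ->]; exact: Vserv_ge0.
Qed.

Variable t : R.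
Hypothesis hut : u <= t.

Let is_exit_epoch n j := n <= D (epoch j) /\ forall k, n <= D (epoch k) -> (j <= k)%N.
Let exit_epoch n : nat := xget 0%N (is_exit_epoch n).
Let leave n := epoch (exit_epoch n).

Lemma exit_epochP n : n <= D t ->
  n <= D (leave n) /\ forall k, n <= D (epoch k) -> (exit_epoch n <= k)%N.
Proof.
move=> n_t; have [jt /andP[jt_t t_jt]] := epoch_locate hut.
have ex : exists k, n <= D (epoch k).
  by exists jt; rewrite -(D_before_next_service jt_t t_jt).
have [m m_n m_min] := ex_minnP ex.
exact (xgetPex 0%N (ex_intro (is_exit_epoch n) m (conj m_n m_min))).
Qed.

Lemma exit_epoch_Du : exit_epoch (D u) = 0%N.
Proof. by have [_ /(_ 0%N (lexx _))] := exit_epochP (D_mono hut); rewrite leqn0 => /eqP. Qed.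

Lemma exit_epoch_gt0 n : D u < n -> n <= D t -> (0 < exit_epoch n)%N.
Proof.
move=> u_n n_t; have [n_exit _] := exit_epochP n_t.
by move: n_exit; rewrite /leave lt0n; apply: contraTneq => ->; rewrite -ltNge.
Qed.

Lemma D_leave n : D u < n -> n <= D t -> D (leave n) = n.
Proof.
move=> u_n n_t; have [n_exit exit_min] := exit_epochP n_t.
move: n_exit; rewrite /leave.
case E : (exit_epoch n) (exit_epoch_gt0 u_n n_t) => [//|j] _ n_exit.
have j_n : D (epoch j) < n by rewrite ltNge; apply/negP => /exit_min; rewrite E ltnn.
have : D (epoch j.+1) <= D (epoch j) + 1 := D_next_service (epoch j).
lia.
Qed.

Lemma exit_epoch_lt n1 n2 : D u <= n1 -> n1 < n2 -> n2 <= D t ->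
  (exit_epoch n1 < exit_epoch n2)%N.
Proof.
move=> u_n1 n12 n2_t; have u_n2 := le_lt_trans u_n1 n12.
move: u_n1; rewrite le_eqVlt => /predU1P [<-|u_n1].
  by rewrite exit_epoch_Du exit_epoch_gt0.
have n1_t : n1 <= D t := le_trans (ltW n12) n2_t.
rewrite ltnNge -epoch_leE; apply/negP => /D_mono.
by rewrite -/(leave _) -/(leave _) !D_leave // leNgt n12.
Qed.

Lemma leave_le n : n <= D t -> leave n <= t.
Proof.
move=> n_t; have [jt /andP[jt_t t_jt]] := epoch_locate hut.
have [_ exit_min] := exit_epochP n_t.
rewrite (D_before_next_service jt_t t_jt) in n_t.
by apply: le_trans (jt_t); rewrite epoch_leE exit_min.
Qed.

Lemma D_lt_before_leave n tau : D u < n -> n <= D t -> tau < leave n -> D tau < n.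
Proof.
move=> u_n n_t tau_n.
have [tau_u | u_tau] := ltP tau u; first exact: le_lt_trans (D_mono (ltW tau_u)) u_n.
have [j /andP[j_tau tau_j]] := epoch_locate u_tau.
rewrite (D_before_next_service j_tau tau_j) ltNge; apply/negP => /(exit_epochP n_t).2.
by rewrite -epoch_leE leNgt (le_lt_trans j_tau tau_n).
Qed.

Lemma leaves_at_leave n : D u < n -> n <= D t -> leaves_at T0 T n (leave n).
Proof.
move=> u_n n_t; have D_n := D_leave u_n n_t.
have cntE y : cnt T0 (T0 n) y = A y - n by rewrite /cnt last_idx_point.
split; first by rewrite ltNge; apply/negP => /D_mono; rewrite D_n leNgt D_arrival.
split; first by rewrite cntE; move: D_n; rewrite /D /Q; lia.
move=> tau /andP[_ tau_n]; rewrite cntE.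
by have := D_lt_before_leave u_n n_t tau_n; rewrite /D /Q; lia.
Qed.

Lemma leave_next_service n : D u < n -> n <= D t ->
  leave n = next_service (epoch (exit_epoch n).-1).
Proof. by move=> u_n n_t; rewrite /leave; case: (exit_epoch n) (exit_epoch_gt0 u_n n_t). Qed.

Lemma Vserv_leave n : D u < n -> n <= D t ->
  let x := epoch (exit_epoch n).-1 in
  Vserv T0 T n = next_point (next_server x) (next_service x) - next_service x.
Proof.
move=> u_n n_t x; set i := next_server x.
have leave_n : leaves_at T0 T n (next_service x).
  by rewrite -leave_next_service //; exact: leaves_at_leave.
apply: xget_unique.
  by exists i, (last_idx (T i) x + 1); rewrite /next_point last_idx_next_service.
move=> v [j [k [leave_k ->]]].
have e : T j k = T i (last_idx (T i) x + 1) := leaves_at_uniq leave_k leave_n.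
have [ji|/hdis/(_ e) //] := eqVneq j i.
by rewrite ji in e *; rewrite (pp_inj (hT i) e) /next_point last_idx_next_service.
Qed.

Lemma vacation_schedule_step n a : D u < n -> n <= D t -> a <= Num.max u (T0 n) ->
  schedule_step (next_points (leave (n - 1))) (next_points (leave n))
    a (Vserv T0 T n) (leave n).
Proof.
move=> u_n n_t a_le; have [arr_n _] := leaves_at_leave u_n n_t.
have := Vserv_leave u_n n_t; have := leave_next_service u_n n_t.
set x := epoch _ => leave_n Vserv_n.
have prev_x : leave (n - 1) <= x.
  rewrite /leave /x epoch_leE -ltnS prednK ?exit_epoch_gt0 //.
  by apply: exit_epoch_lt => //; lia.
split.
- by apply: le_trans a_le _; rewrite ge_max (ltW arr_n) epoch_ge.
- apply/hasP; exists (next_point (next_server x) (leave (n - 1))).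
    by apply: map_f; rewrite mem_enum.
  by rewrite leave_n next_point_mono.
- by move=> y; rewrite Vserv_n leave_n subrKC; exact: nfree_next_points_step.
Qed.

Lemma nth_waiting_arrivals K j : (j < `|Q u| + K)%N ->
  let cv := nth (0, 0) (waiting `|Q u| ++ arrivals K) j in
  cv.1 <= Num.max u (T0 (D u + 1 + j%:Z)) /\ cv.2 = Vserv T0 T (D u + 1 + j%:Z).
Proof.
move=> j_lt cv; have Qu := Q_ge0 u.
rewrite /cv nth_cat size_map size_iota; case: ltnP => j_q.
  rewrite (nth_map 0%N) ?size_iota // nth_iota //= le_max lexx.
  by split=> //; congr (Vserv T0 T _); rewrite /D; lia.
rewrite (nth_map 0%N) ?size_iota ?nth_iota /=; try lia.
have -> : A u + 1 + (j - `|Q u|)%N%:Z = D u + 1 + j%:Z by rewrite /D; lia.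
by rewrite le_max lexx orbT.
Qed.

Lemma fcfs_starts_le_leave F K j : perm_eq F (next_points u) ->
  let J := `|D t - D u|%N in (J <= `|Q u| + K)%N -> (j < J)%N ->
  nth 0 (fcfs_starts F (take J (waiting `|Q u| ++ arrivals K))) j <= leave (D u + 1 + j%:Z).
Proof.
move=> F_perm J J_le j_J; have Du_t := D_mono hut.
have J_size : (J <= size (waiting `|Q u| ++ arrivals K))%N.
  by rewrite size_cat !size_map !size_iota.
apply: (fcfs_starts_le_schedule (sg := u) (s := fun k => leave (D u + 1 + k%:Z))
          (Gs := fun k => next_points (leave (D u + k%:Z)))); rewrite ?size_takel //.
- by move=> y _; rewrite addr0 /leave exit_epoch_Du /nfree (permP F_perm).
- exact: epoch_ge.
- by move=> k k_J; rewrite /leave epoch_leE ltnW // exit_epoch_lt //; rewrite /J in k_J; lia.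
move=> k k_J; rewrite nth_take //.
have [a_le ->] := nth_waiting_arrivals (leq_trans k_J J_le).
have -> : D u + k.+1%:Z = D u + 1 + k%:Z by lia.
have -> : D u + k%:Z = D u + 1 + k%:Z - 1 by lia.
by apply: vacation_schedule_step => //; rewrite /J in k_J; lia.
Qed.

Lemma Qstd_le_Qv r e : perm_eq [seq u + x | x <- r] (next_points u) ->
  (Qstd T0 T u `|Q u| r e (t - u))%:Z <= Q t.
Proof.
move=> r_perm; rewrite QstdE.
set F := [seq u + x | x <- r]; set K := `|A t - A u|%N.
set cs := waiting _ ++ arrivals K; set J := `|D t - D u|%N.
have size_cs : size cs = (`|Q u| + K)%N by rewrite size_cat !size_map !size_iota.
have Qu := Q_ge0 u; have Qt := Q_ge0 t; have Du_Dt := D_mono hut.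
have Au_At : A u <= A t := last_idx_mono hT0 hut.
have [Du Dt] : D u = A u - Q u /\ D t = A t - Q t by [].
have J_le : (J <= `|Q u| + K)%N by rewrite /J /K; lia.
have starts_le j : (j < J)%N -> ~~ (t < nth 0 (fcfs_starts F cs) j).
  move=> j_J; rewrite -leNgt -(cat_take_drop J cs) fcfs_starts_cat nth_cat.
  rewrite size_fcfs_starts size_takel ?size_cs // j_J.
  apply: le_trans (fcfs_starts_le_leave r_perm J_le j_J) (leave_le _).
  by rewrite /J in j_J; lia.
apply: le_trans (_ : (size (fcfs_starts F cs) - J)%N%:Z <= _).
  by rewrite lez_nat; exact: count_le_size_drop starts_le.
by rewrite size_fcfs_starts size_cs /J /K; lia.
Qed.

Lemma shifted_resid_perm :
  perm_eq [seq u + x | x <- sort <=%R [seq resid (T i) u | i <- enum 'I_c]] (next_points u).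
Proof.
have -> : next_points u = [seq u + x | x <- [seq resid (T i) u | i <- enum 'I_c]].
  by rewrite -map_comp; apply: eq_map => i /=; rewrite /resid subrKC.
by apply: perm_map; rewrite perm_sort.
Qed.

End Vacation.

Theorem lemma3 (R : realType) (c : nat) (T0 : int -> R) (T : 'I_c -> int -> R)
  (hc : (0 < c)%N)
  (hT0 : point_process T0)
  (hT : forall i, point_process (T i))
  (hdis0 : forall (i : 'I_c) (n m : int), T i n <> T0 m)
  (hdis : forall (i j : 'I_c) (n m : int), i != j -> T i n <> T j m)
  (hstab : forall t : R, exists k : int, is_Qv T0 T t k)
  (u : R) :
  let q : nat := `|Qv T0 T u|%N in
  let r : seq R := sort <=%R [seq resid (T i) u | i <- enum 'I_c] in
  let e : R := u - T0 (last_idx T0 u) in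
  forall t : R, u <= t ->
    (Qstd T0 T u 0 (nseq c 0%R) e (t - u) <= Qstd T0 T u q r e (t - u))%N /\
    ((Qstd T0 T u q r e (t - u))%:Z <= Qv T0 T t).
Proof.
move=> q r e t hut; split.
  by apply: Qstd_idle_le; rewrite // size_sort size_map size_enum_ord.
exact: Qstd_le_Qv (shifted_resid_perm T u).
Qed.
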